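(* Let $\mu$ be a singular strong limit cardinal, let $\mathbf K$ be either the class of locally finite groups or a universal class whose vocabulary has cardinality $<\mu$, and let $N\in\mathbf K$ have cardinality $\mu$. Then the set $$\mathrm{IDC}_{<\mu}(N)=\{M : M\subseteq N,\ M\in\mathbf K,\ |M|<\mu,\ M \text{ is } {\rm cf}(\mu)\text{-indecomposable}\}$$ has cardinality at most $\mu$.
   Context: A universal class $\mathbf K$ is a class of $\tau$-structures closed under isomorphism such that a $\tau$-structure belongs to $\mathbf K$ iff each of its finitely generated substructures does; $M\subseteq N$ means $M$ is a substructure of $N$. The class of locally finite groups (groups all of whose finitely generated subgroups are finite) is such a class in the group vocabulary, with substructures being subgroups. For a regular cardinal $\theta$, $M\in\mathbf K$ is $\theta$-indecomposable if whenever $\langle M_i:i<\theta\rangle$ is a $\subseteq$-increasing sequence of members of $\mathbf K$ with union $M$, then $M=M_i$ for some $i<\theta$. *)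

From mathcomp Require Import all_boot.
From Stdlib Require Import List.

Set Implicit Arguments.
Unset Strict Implicit.
Unset Printing Implicit Defensive.

Definition le_card (A B : Type) : Prop := exists f : A -> B, injective f.
Definition lt_card (A B : Type) : Prop := le_card A B /\ ~ le_card B A.

Definition infinite_card (U : Type) : Prop := le_card nat U.

(* |U| is a strong limit: 2^lambda < |U| for every lambda < |U|
   (every cardinal below |U| is the size of some subset of U). *)
Definition strong_limit (U : Type) : Prop :=
  forall X : U -> Prop, lt_card {u | X u} U -> lt_card ({u | X u} -> Prop) U.

Definition covered_by (U J : Type) : Prop :=
  exists A : J -> U -> Prop,
    (forall j, lt_card {u | A j u} U) /\ (forall u, exists j, A j u).

Definition singular (U : Type) : Prop :=
  exists X : U -> Prop, lt_card {u | X u} U /\ covered_by U {u | X u}.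

(* (I, lt) is (order-isomorphic to) the initial ordinal cf(|U|):
   a well-order all of whose proper initial segments have smaller
   cardinality, whose cardinality is the least |J| with covered_by U J. *)
Definition is_cof_ordinal (U I : Type) (lt : I -> I -> Prop) : Prop :=
  (forall i j k, lt i j -> lt j k -> lt i k) /\
  (forall i j, lt i j \/ i = j \/ lt j i) /\
  well_founded lt /\
  (forall i, lt_card {j | lt j i} I) /\
  covered_by U I /\
  (forall J : I -> Prop, lt_card {i | J i} I -> ~ covered_by U {i | J i}).

Record vocab := Vocab {
  vfun : Type; vrel : Type;
  farity : vfun -> nat; rarity : vrel -> nat }.

Record str (tau : vocab) := Str {
  car :> Type;
  fint : forall f : vfun tau, ('I_(farity f) -> car) -> car;
  rint : forall r : vrel tau, ('I_(rarity r) -> car) -> Prop }.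

Arguments fint {tau} s f xs.
Arguments rint {tau} s r xs.

Definition isomorphic (tau : vocab) (A B : str tau) : Prop :=
  exists (h : A -> B) (g : B -> A),
    cancel h g /\ cancel g h /\
    (forall f xs, h (fint A f xs) = fint B f (fun i => h (xs i))) /\
    (forall r xs, rint A r xs <-> rint B r (fun i => h (xs i))).

Definition closed (tau : vocab) (A : str tau) (S : A -> Prop) : Prop :=
  forall f (xs : 'I_(farity f) -> A), (forall i, S (xs i)) -> S (fint A f xs).

Definition sub (tau : vocab) (A : str tau) (S : A -> Prop) (hS : closed S)
  : str tau :=
  @Str tau {a | S a}
    (fun f xs => exist _ (fint A f (fun i => sval (xs i)))
                      (hS f _ (fun i => proj2_sig (xs i))))
    (fun r xs => rint A r (fun i => sval (xs i))).

Definition gen (tau : vocab) (A : str tau) (X : A -> Prop) : A -> Prop :=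
  fun a => forall S : A -> Prop, closed S -> (forall x, X x -> S x) -> S a.

Lemma gen_closed (tau : vocab) (A : str tau) (X : A -> Prop) : closed (gen X).
Proof.
intros f xs H S hS hX. apply: (hS) => i; exact: (H i S hS hX).
Qed.

Definition fgsub (tau : vocab) (A : str tau) (l : list A) : str tau :=
  sub (@gen_closed tau A (fun a : A => List.In a l)).

Definition universal_class (tau : vocab) (K : str tau -> Prop) : Prop :=
  (forall A B, isomorphic A B -> K A -> K B) /\
  (forall A, K A <-> forall l : list A, K (fgsub l)).

Definition inK (tau : vocab) (K : str tau -> Prop) (N : str tau)
  (S : N -> Prop) : Prop := exists hS : closed S, K (sub hS).

Definition indecomposable (tau : vocab) (K : str tau -> Prop) (N : str tau)
  (I : Type) (lt : I -> I -> Prop) (M : N -> Prop) : Prop :=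
  forall Ms : I -> N -> Prop,
    (forall i, inK K (Ms i)) ->
    (forall i j, lt i j -> forall a, Ms i a -> Ms j a) ->
    (forall a, M a <-> exists i, Ms i a) ->
    exists i, forall a, M a <-> Ms i a.

(* IDC_{<mu}(N) with mu = |N| and theta given by (I, lt) *)
Definition IDC (tau : vocab) (K : str tau -> Prop) (N : str tau)
  (I : Type) (lt : I -> I -> Prop) (M : N -> Prop) : Prop :=
  [/\ inK K M, lt_card {a | M a} N & indecomposable K lt M].

Inductive gsym := gmul | ginv | gone.
Definition garity (s : gsym) : nat :=
  match s with gmul => 2 | ginv => 1 | gone => 0 end.
Definition grp_voc : vocab := @Vocab gsym Empty_set garity (fun e => match e with end).

Definition args2 (A : Type) (x y : A) : 'I_2 -> A :=
  fun i => if val i == 0 then x else y.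

Definition gop (A : str grp_voc) (x y : A) : A := fint A gmul (args2 x y).
Definition gin (A : str grp_voc) (x : A) : A := fint A ginv (fun _ : 'I_1 => x).
Definition ord0_elim (T : Type) (i : 'I_0) : T :=
  let: Ordinal m Hm := i in
  False_rect T (Bool.diff_false_true (etrans (esym (ltn0 m)) Hm)).
Definition gid (A : str grp_voc) : A := fint A gone (@ord0_elim A).

Definition is_group (A : str grp_voc) : Prop :=
  [/\ (forall x y z : A, gop (gop x y) z = gop x (gop y z)),
      (forall x : A, gop (gid A) x = x /\ gop x (gid A) = x) &
      (forall x : A, gop (gin x) x = gid A /\ gop x (gin x) = gid A)].

Definition locally_finite_group (A : str grp_voc) : Prop :=
  is_group A /\
  forall l : list A, exists l' : list A, forall a, gen (fun x => List.In x l) a -> List.In a l'.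

From Pilot Require Import Defs.
From mathcomp Require Import all_boot.
From mathcomp Require Import boolp classical_sets.
From Stdlib Require Import ProofIrrelevance.

(* Write mu = |N| and theta = cf(mu), realised by (I, lt).  Cover N by an
   increasing chain (U_i)_{i<theta} of sets of size < mu.  If M is
   theta-indecomposable, the chain of substructures generated by M /\ U_i has
   union M, so M is generated by M /\ U_i for a single i: M is coded by the
   pair (i, M /\ U_i).  Since mu is a strong limit, each of the theta sets of
   codes P(U_i) has size < mu, and these theta small sets embed disjointly
   into N by recursion along theta: at stage i the images used so far form a
   union of fewer than theta sets of size < mu, hence have size < mu, and
   Cantor's theorem leaves room for an injection of P(U_i) avoiding them. *)

Set Implicit Arguments.
Unset Strict Implicit.
Unset Printing Implicit Defensive.

Lemma sval_inj (T : Type) (P : T -> Prop) : injective (@sval T P).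
Proof. by case=> x px [y py] /= exy; exact: eq_exist. Qed.

Lemma le_card_refl (A : Type) : le_card A A.
Proof. by exists id. Qed.

Lemma le_card_trans (A B C : Type) : le_card A B -> le_card B C -> le_card A C.
Proof. by move=> [f injf] [g injg]; exists (g \o f); exact: inj_comp. Qed.

Lemma le_lt_card_trans (A B C : Type) :
  le_card A B -> lt_card B C -> lt_card A C.
Proof.
move=> leAB [leBC nleCB]; split; first exact: le_card_trans leAB leBC.
by move=> leCA; apply: nleCB; exact: le_card_trans leCA leAB.
Qed.

Lemma le_card_factor (A B C : Type) (p : B -> C) (v : A -> C) :
  injective v -> (forall a, exists b, p b = v a) -> le_card A B.
Proof.
move=> injv vp; exists (fun a => projT1 (cid (vp a))) => a1 a2 e.
by apply: injv; rewrite -(projT2 (cid (vp a1))) -(projT2 (cid (vp a2))) e.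
Qed.

Lemma not_le_card_pow (X : Type) : ~ le_card (X -> Prop) X.
Proof.
move=> [f injf]; pose Q x := exists P, f P = x /\ ~ P x.
have nQ : ~ Q (f Q).
  by move=> QfQ; case: (QfQ) => P [/injf eP nP]; apply: nP; rewrite eP.
by apply: (nQ); exists Q.
Qed.

Definition partial_bijection (X Y : Type) (R : set (X * Y)) : Prop :=
  (forall x y y', R (x, y) -> R (x, y') -> y = y') /\
  (forall x x' y, R (x, y) -> R (x', y) -> x = x').

(* A maximal partial bijection, given by Zorn's lemma, is total on X or onto Y. *)
Lemma le_card_total (X Y : Type) : le_card X Y \/ le_card Y X.
Proof.
have [F Fpb Ftot|R [[Rfun Rinj] Rmax]] :=
  @Zorn_bigcup (X * Y) (@partial_bijection X Y).
  have common p q : (\bigcup_(A in F) A)%classic p ->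
      (\bigcup_(A in F) A)%classic q -> exists2 A, F A & A p /\ A q.
    move=> [A FA Ap] [B FB Bq]; have [AB|BA] := Ftot _ _ FA FB.
    - by exists B => //; split=> //; exact: AB.
    - by exists A => //; split=> //; exact: BA.
  split=> [x y y' | x x' y] Rp Rq;
    have [A /Fpb[Afun Ainj] [Ap Aq]] := common _ _ Rp Rq.
  - exact: Afun Ap Aq.
  - exact: Ainj Ap Aq.
have [Rtot|/existsNP[x0 Rx0]] := pselect (forall x, exists y, R (x, y)).
  left; pose f x := projT1 (cid (Rtot x)).
  have Rf x : R (x, f x) := projT2 (cid (Rtot x)).
  by exists f => x x' e; apply: (Rinj _ _ (f x) (Rf x)); rewrite e.
have [Rsurj|/existsNP[y0 Ry0]] := pselect (forall y, exists x, R (x, y)).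
  right; pose g y := projT1 (cid (Rsurj y)).
  have Rg y : R (g y, y) := projT2 (cid (Rsurj y)).
  by exists g => y y' e; apply: (Rfun (g y) _ _ (Rg y)); rewrite e.
have Rx0' y : ~ R (x0, y) by move=> Rxy; apply: Rx0; exists y.
have Ry0' x : ~ R (x, y0) by move=> Rxy; apply: Ry0; exists x.
exfalso; apply: (Rmax (fun p => R p \/ p = (x0, y0))).
  by split=> [p Rp|sub]; [left|apply: (Rx0' y0); apply: sub; right].
split=> [x y y'|x x' y] [Rp|[? ?]] [Rq|[? ?]]; subst=> //.
- exact: Rfun Rp Rq.
- by case: (Rx0' _ Rp).
- by case: (Rx0' _ Rq).
- exact: Rinj Rp Rq.
- by case: (Ry0' _ Rp).
- by case: (Ry0' _ Rq).
Qed.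

Lemma le_card_sum (X X' Y Y' : Type) :
  le_card X X' -> le_card Y Y' -> le_card (X + Y) (X' + Y').
Proof.
move=> [f injf] [g injg].
exists (fun s => match s with inl x => inl (f x) | inr y => inr (g y) end).
by case=> [x|y] [x'|y'] // [e]; [rewrite (injf _ _ e) | rewrite (injg _ _ e)].
Qed.

(* Crude, but valid for every X, finite or not. *)
Lemma sum_self_le_card_pow2 (X : Type) : le_card (X + X) ((X -> Prop) -> Prop).
Proof.
exists (fun s => match s with inl x => fun P => P x | inr x => fun P => ~ P x end).
case=> x [] y /= e.
- have := congr1 (fun F => F (eq^~ x)) e => /= exy.
  by have -> : y = x by rewrite -exy.
- have := congr1 (fun F => F (fun _ => True)) e => /= eT.
  by have : ~ True by rewrite -eT.
- have := congr1 (fun F => F (fun _ => True)) e => /= eT.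
  by have : ~ True by rewrite eT.
- have := congr1 (fun F => F (fun z => z <> x)) e => /= exy.
  by have /contrapT -> : ~ y <> x by rewrite -exy.
Qed.

Section StrongLimit.
Variable N : Type.
Hypothesis N_strong_limit : strong_limit N.

Lemma pow_lt_card (X : Type) : lt_card X N -> lt_card (X -> Prop) N.
Proof.
move=> ltXN; have [[f injf] _] := ltXN.
pose X' n := exists x, f x = n.
have ltX'N : lt_card {n | X' n} N.
  apply: le_lt_card_trans ltXN; apply: (le_card_factor (p := f) (@sval_inj _ X')).
  by move=> [n [x fx]]; exists x.
apply: le_lt_card_trans (N_strong_limit ltX'N).
have fibre P x : (exists2 x', f x' = f x & P x') = P x.
  by apply: propext; split=> [[x' /injf ->]|Px] //; exists x.
exists (fun P u => exists2 x, f x = sval u & P x) => P Q ePQ; apply/funext => x.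
rewrite -[P x]fibre -[Q x]fibre.
by have /= := congr1 (fun F => F (exist X' (f x) (ex_intro _ x erefl))) ePQ.
Qed.

Lemma sum_lt_card (X Y : Type) : lt_card X N -> lt_card Y N -> lt_card (X + Y) N.
Proof.
have self Z : lt_card Z N -> lt_card (Z + Z) N.
  move=> ltZN; apply: le_lt_card_trans (sum_self_le_card_pow2 Z) _.
  by do 2 apply: pow_lt_card.
move=> ltXN ltYN; have [leXY|leYX] := le_card_total X Y.
- exact: le_lt_card_trans (le_card_sum leXY (le_card_refl Y)) (self _ ltYN).
- exact: le_lt_card_trans (le_card_sum (le_card_refl X) leYX) (self _ ltXN).
Qed.

Lemma inj_avoid (X : Type) (D : N -> Prop) :
  lt_card X N -> lt_card {n | D n} N ->
  exists g : X -> N, injective g /\ forall x, ~ D (g x).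
Proof.
move=> ltXN ltDN; have [[E injE] _] := pow_lt_card (sum_lt_card ltXN ltDN).
pose code x (T : {n | D n} -> Prop) (s : X + {n | D n}) :=
  match s with inl x' => x' = x | inr d => T d end.
(* For fixed x, T |-> E (code x T) is injective, so by Cantor it leaves D. *)
have fresh x : exists T, ~ D (E (code x T)).
  apply: contrapT => noT.
  have inD T : D (E (code x T)) by apply: contrapT => nD; apply: noT; exists T.
  apply: (@not_le_card_pow {n | D n}); exists (fun T => exist D _ (inD T)).
  move=> T1 T2 /(congr1 sval)/injE eT; apply/funext => d.
  by have /= := congr1 (fun c => c (inr d)) eT.
exists (fun x => E (code x (projT1 (cid (fresh x))))); split.
  by move=> x1 x2 /injE/(congr1 (fun c => c (inl x1))) /= <-.
by move=> x; exact: projT2 (cid (fresh x)).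
Qed.

End StrongLimit.

Lemma union_lt_card (N I : Type) (J : I -> Prop) (B : I -> N -> Prop) :
  (forall J' : I -> Prop, lt_card {i | J' i} I -> ~ covered_by N {i | J' i}) ->
  lt_card {i | J i} I -> (forall i, J i -> lt_card {a | B i a} N) ->
  lt_card {a | exists2 i, J i & B i a} N.
Proof.
move=> cof ltJI ltBN; split; first by exists sval; exact: sval_inj.
move=> [g injg]; apply: (cof J ltJI).
exists (fun j n => B (sval j) (sval (g n))); split.
- move=> [i Ji] /=; apply: le_lt_card_trans (ltBN i Ji).
  exists (fun n : {n | B i (sval (g n))} => exist (B i) _ (svalP n)).
  move=> n1 n2 /(congr1 sval) e; apply/sval_inj/injg/sval_inj; exact: e.
- by move=> n; have [i Ji Bi] := svalP (g n); exists (exist _ i Ji).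
Qed.

Lemma sigma_le_card (N I : Type) (lt : I -> I -> Prop) (X : I -> Type) :
  strong_limit N -> is_cof_ordinal N lt -> (forall i, lt_card (X i) N) ->
  le_card {i & X i} N.
Proof.
move=> SL [_ [lt_total [lt_wf [lt_seg [_ cof]]]]] ltXN.
pose fresh i (prev : forall j, lt j i -> X j -> N) (g : X i -> N) :=
  injective g /\ forall j (lji : lt j i) x y, g x <> prev j lji y.
have fresh_ex i prev : exists g, fresh i prev g.
  pose used j n := exists (lji : lt j i) y, prev j lji y = n.
  have ltUN : lt_card {n | exists2 j, lt j i & used j n} N.
    apply: union_lt_card cof (lt_seg i) _ => j lji.
    apply: le_lt_card_trans (ltXN j).
    apply: (le_card_factor (p := prev j lji) (@sval_inj _ _)).
    move=> [n [h [y prevy]]] /=.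
    by exists y; rewrite -prevy (proof_irrelevance _ h lji).
  have [g [injg g_unused]] := inj_avoid SL (ltXN i) ltUN.
  exists g; split=> // j lji x y gxy; apply: (g_unused x).
  by exists j => //; exists lji, y.
pose e := Fix lt_wf (fun i => X i -> N)
  (fun i prev => projT1 (cid (fresh_ex i prev))).
have e_fresh i : fresh i (fun j _ => e j) (e i).
  rewrite /e Fix_eq; first exact: projT2 (cid _).
  move=> j f g fg; suff -> : f = g by [].
  by do 2 apply: functional_extensionality_dep => ?; exact: fg.
exists (fun s => e (projT1 s) (projT2 s)) => -[i1 x1] [i2 x2] /= exy.
have ei : i1 = i2.
  have [l12|[//|l21]] := lt_total i1 i2.
  - by case: ((e_fresh i2).2 i1 l12 x2 x1).
  - by case: ((e_fresh i1).2 i2 l21 x1 x2).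
by subst i2; congr existT; exact: (e_fresh i1).1.
Qed.

Lemma cof_chain (N I : Type) (lt : I -> I -> Prop) :
  strong_limit N -> is_cof_ordinal N lt ->
  exists U : I -> N -> Prop,
    [/\ forall i, lt_card {a | U i a} N,
        forall i j, lt i j -> forall a, U i a -> U j a &
        forall a, exists i, U i a].
Proof.
move=> SL [lt_trans [_ [_ [lt_seg [[A [ltAN A_cover]] cof]]]]].
exists (fun i a => exists2 j, lt j i \/ j = i & A j a); split.
- move=> i; have ltBN := union_lt_card cof (lt_seg i) (fun j _ => ltAN j).
  apply: le_lt_card_trans (sum_lt_card SL ltBN (ltAN i)).
  apply: (le_card_factor
    (p := fun s => match s with inl u => sval u | inr u => sval u end)
    (@sval_inj _ _)).
  move=> [a [j [lji|eji] Aja]] /=.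
  + by exists (inl (exist _ a (ex_intro2 _ _ j lji Aja))).
  + by subst j; exists (inr (exist _ a Aja)).
- move=> i j lij a [k lki Aka]; exists k => //; left.
  by case: lki => [lki|->] //; exact: lt_trans lki lij.
- by move=> a; have [j Aja] := A_cover a; exists j, j; [right|].
Qed.

Section Generation.
Variables (tau : vocab) (A : str tau).

Lemma gen_subset (X : A -> Prop) a : X a -> gen X a.
Proof. by move=> Xa S _; apply. Qed.

Lemma gen_least (X S : A -> Prop) :
  Defs.closed S -> (forall a, X a -> S a) -> forall a, gen X a -> S a.
Proof. by move=> S_closed XS a; apply. Qed.

Lemma gen_mono (X Y : A -> Prop) :
  (forall a, X a -> Y a) -> forall a, gen X a -> gen Y a.
Proof. by move=> XY a genXa S S_closed YS; apply: genXa => // x /XY /YS. Qed.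

End Generation.

Section Traces.
Variables (tau : vocab) (K : str tau -> Prop) (N : str tau).
Variables (I : Type) (lt : I -> I -> Prop) (U : I -> N -> Prop).
Hypothesis K_sub : forall S : N -> Prop, Defs.closed S -> inK K S.
Hypothesis U_mono : forall i j, lt i j -> forall a, U i a -> U j a.
Hypothesis U_cover : forall a, exists i, U i a.

Lemma indecomposable_gen_trace (M : N -> Prop) :
  Defs.closed M -> indecomposable K lt M ->
  exists i, M = gen (fun b => M b /\ U i b).
Proof.
move=> M_closed M_indec.
have [i Mi] : exists i, forall a, M a <-> gen (fun b => M b /\ U i b) a.
  apply: M_indec => [i|i j lij|a].
  - by apply: K_sub; exact: gen_closed.
  - by apply: gen_mono => b [Mb Uib]; split; last exact: U_mono lij _ Uib.
  - split=> [Ma|[i]]; last by apply: gen_least M_closed _ a => b [].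
    by have [i Uia] := U_cover a; exists i; exact: gen_subset.
by exists i; apply/funext => a; apply/propext.
Qed.

Lemma IDC_le_card_traces :
  le_card {M : N -> Prop | IDC K lt M} {i : I & {a | U i a} -> Prop}.
Proof.
have trace (M : {M | IDC K lt M}) :
    exists i, sval M = gen (fun b => sval M b /\ U i b).
  by case: M => M [[M_closed _] _ M_indec] /=; exact: indecomposable_gen_trace.
exists (fun M => existT _ (projT1 (cid (trace M))) (fun u => sval M (sval u))).
move=> M1 M2; case: (cid (trace M1)) => i M1E; case: (cid (trace M2)) => i2 M2E.
move=> /= eM; have ei := existT_inj1 eM; subst i2.
have {}eM := inj_pair2 _ _ _ _ _ eM.
apply: sval_inj; rewrite M1E M2E; congr gen; apply/funext => b; apply/propext.
split=> -[Mb Uib]; split=> //.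
- by have /= <- := congr1 (fun c => c (exist _ b Uib)) eM.
- by have /= -> := congr1 (fun c => c (exist _ b Uib)) eM.
Qed.

End Traces.

Lemma IDC_le_card (tau : vocab) (K : str tau -> Prop) (N : str tau)
    (I : Type) (lt : I -> I -> Prop) :
  strong_limit N -> is_cof_ordinal N lt ->
  (forall S : N -> Prop, Defs.closed S -> inK K S) ->
  le_card {M : N -> Prop | IDC K lt M} N.
Proof.
move=> SL cof K_sub; have [U [ltUN U_mono U_cover]] := cof_chain SL cof.
apply: le_card_trans (IDC_le_card_traces K_sub U_mono U_cover) _.
by apply: (sigma_le_card SL cof) => i; exact: (pow_lt_card SL (ltUN i)).
Qed.

Section Substructures.
Variables (tau : vocab) (N : str tau) (S : N -> Prop) (S_closed : Defs.closed S).

Lemma gen_sub_sval (l : list (sub S_closed)) (a : sub S_closed) :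
  gen (fun x => List.In x l) a ->
  gen (fun x => List.In x (List.map sval l)) (sval a).
Proof.
apply: (gen_least (S := fun a : sub S_closed => gen _ (sval a))).
  by move=> f xs genxs; exact: gen_closed genxs.
by move=> x lx; apply: gen_subset; exact: List.in_map.
Qed.

Lemma gen_sval_sub (l : list (sub S_closed)) (b : N) :
  gen (fun x => List.In x (List.map sval l)) b ->
  S b /\ forall Sb : S b, gen (fun x => List.In x l) (exist _ b Sb : sub S_closed).
Proof.
apply: (gen_least (S := fun b => S b /\
  forall Sb : S b, gen (fun x => List.In x l) (exist _ b Sb : sub S_closed))).
- move=> f xs genxs; split; first by apply: S_closed => i; exact: (genxs i).1.
  move=> Sfxs; pose ys i : sub S_closed := exist _ (xs i) (genxs i).1.
  have -> : exist _ _ Sfxs = fint (sub S_closed) f ys by exact: sval_inj.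
  by apply: gen_closed => i; exact: (genxs i).2.
- move=> _ /List.in_map_iff[a [<- la]]; split=> [|Sa]; first exact: svalP a.
  have -> : exist _ (sval a) Sa = a by exact: sval_inj.
  exact: gen_subset.
Qed.

Lemma fgsub_sval_iso (l : list (sub S_closed)) :
  isomorphic (fgsub (List.map sval l)) (fgsub l).
Proof.
pose h (y : fgsub (List.map sval l)) : fgsub l :=
  exist _ (exist _ (sval y) (gen_sval_sub (svalP y)).1)
    ((gen_sval_sub (svalP y)).2 _).
pose g (x : fgsub l) : fgsub (List.map sval l) :=
  exist _ (sval (sval x)) (gen_sub_sval (svalP x)).
exists h, g; split; [|split; [|split]] => //.
- by move=> y; exact: sval_inj.
- by move=> x; do 2 apply: sval_inj.
- by move=> f xs; do 2 apply: sval_inj.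
Qed.

Lemma universal_class_inK (K : str tau -> Prop) :
  universal_class K -> K N -> inK K S.
Proof.
move=> [K_iso K_fg] KN; exists S_closed; apply/K_fg => l.
by apply: K_iso (fgsub_sval_iso l) _; move/K_fg: KN.
Qed.

End Substructures.

Lemma locally_finite_group_sub (N : str grp_voc) (S : N -> Prop)
    (S_closed : Defs.closed S) :
  locally_finite_group N -> locally_finite_group (sub S_closed).
Proof.
move=> [[mulA mul1 mulV] lfN].
have sval_op (x y : sub S_closed) : sval (gop x y) = gop (sval x) (sval y).
  rewrite /gop /=; congr (fint N gmul _).
  by apply/funext => i; rewrite /args2; case: ifP.
have sval_id : sval (gid (sub S_closed)) = gid N.
  by rewrite /gid /=; congr (fint N gone _); apply/funext => -[].
split; first split.
- by move=> x y z; apply: sval_inj; rewrite !sval_op mulA.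
- by move=> x; split; apply: sval_inj; rewrite sval_op sval_id; case: (mul1 (sval x)).
- by move=> x; split; apply: sval_inj; rewrite sval_op sval_id; case: (mulV (sval x)).
move=> l; have [l' genl'] := lfN (List.map sval l).
exists (List.flat_map
  (fun b => if pselect (S b) is left Sb then [:: exist _ b Sb] else [::]) l').
move=> a /gen_sub_sval /genl' l'a.
apply/List.in_flat_map; exists (sval a); split=> //.
case: pselect => [Sa|]; last by case; exact: svalP a.
by left; exact: sval_inj.
Qed.

Theorem claim1p6 :
  (forall (tau : vocab) (K : str tau -> Prop) (N : str tau)
          (I : Type) (lt : I -> I -> Prop),
      infinite_card N -> strong_limit N -> singular N ->
      universal_class K -> lt_card (vfun tau + vrel tau)%type N ->
      K N -> is_cof_ordinal N lt ->
      le_card {M : N -> Prop | IDC K lt M} N)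
  /\
  (forall (N : str grp_voc) (I : Type) (lt : I -> I -> Prop),
      infinite_card N -> strong_limit N -> singular N ->
      locally_finite_group N -> is_cof_ordinal N lt ->
      le_card {M : N -> Prop | IDC locally_finite_group lt M} N).
Proof.
split.
- move=> tau K N I lt _ SL _ K_univ _ KN cof.
  by apply: IDC_le_card SL cof _ => S S_closed; exact: universal_class_inK.
- move=> N I lt _ SL _ N_lf cof.
  apply: IDC_le_card SL cof _ => S S_closed.
  by exists S_closed; exact: locally_finite_group_sub.
Qed.
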